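(* Let $X=(x_1,\ldots,x_L,x_1,\ldots,x_L,\ldots)$ be a periodic sequence of positive reals with period $L$. Assume that for every $c\in[0,1]$ the limit $F_X(c):=\lim_{k\to\infty}F_X(k,c)$ exists and that $c\mapsto F_X(c)$ is continuous on $[0,1]$. Then for every $c\in(0,1]$ the limit $\lim_{n\to\infty}S(X,n,\lceil cn\rceil)^{1/\lceil cn\rceil}$ exists and equals $F_X(c)$.
   Context: For a sequence $X$ of positive reals and integers $1\le k\le n$, $S(X,n,k):=\binom{n}{k}^{-1}\sum_{1\le i_1<\cdots<i_k\le n}x_{i_1}\cdots x_{i_k}$. For $k\ge1$ and $c\in(0,1]$ set $F_X(k,c):=S(X,kL,\lceil ckL\rceil)^{1/\lceil ckL\rceil}$, and set $F_X(k,0):=(x_1+\cdots+x_L)/L$. *)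

From HB Require Import structures.
From mathcomp Require Import all_boot all_order all_algebra.
From mathcomp Require Import all_classical all_reals all_analysis.
Set Implicit Arguments. Unset Strict Implicit. Unset Printing Implicit Defensive.
Import Order.TTheory GRing.Theory Num.Theory.
Local Open Scope ring_scope.

(* ceiling of a real, as a natural number (used only at nonnegative arguments) *)
Definition ceiln {R : realType} (r : R) : nat := `|Num.ceil r|%N.

(* S(X,n,k) = binom(n,k)^{-1} * sum over k-subsets {i_1<...<i_k} of {1..n}
   of x_{i_1}...x_{i_k}.  Sequence X is 0-indexed: x_1 = X 0. *)
Definition S {R : realType} (X : nat -> R) (n k : nat) : R :=
  ('C(n, k)%:R)^-1 *
  \sum_(A : {set 'I_n} | #|A| == k) \prod_(i in A) X (nat_of_ord i).

Definition FX {R : realType} (X : nat -> R) (L k : nat) (c : R) : R :=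
  if c == 0 then (\sum_(i < L) X i) / L%:R
  else let m := ceiln (c * (k * L)%:R) in
       powR (S X (k * L) m) (m%:R)^-1.

From HB Require Import structures.
From mathcomp Require Import all_boot all_order all_algebra.
From mathcomp Require Import all_classical all_reals all_analysis.
From mathcomp Require Import ring lra zify.
Import Order.TTheory GRing.Theory Num.Theory.
Import numFieldNormedType.Exports.
Local Open Scope ring_scope.
Local Open Scope classical_set_scope.

(* Write S(X,n,k) = e_k(x_1,...,x_n) / C(n,k) with e_k the elementary
   symmetric polynomial, and let m <= x_i <= M.  The recurrence
   e_{n+1,k} = e_{n,k} + x_{n+1} e_{n,k-1} and the Newton-type bounds
   (n - k) m e_{n,k} <= (k+1) e_{n,k+1} <= n M e_{n,k} show that ln S(X,n,k)
   moves by a bounded amount when n grows by one and k either stays fixed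
   (while k/n stays away from 1) or grows by one (while k/n stays away
   from 0).  Going from N = L*floor(n/L) to n in at most L such steps,
   ln S(X,n,ceil(cn)) and ln S(X,N,ceil(cN)) differ by O(L); after division
   by ceil(cn) ~ cn, the n-th term and F_X(floor(n/L),c) have a ratio tending
   to 1, so both tend to F_X(c). *)

Lemma ceiln_bounds (R : realType) (x : R) : 0 <= x ->
  x <= (ceiln x)%:R < x + 1.
Proof.
move=> x0; rewrite /ceiln natr_absz ger0_norm; last first.
  by rewrite ceil_ge0 (lt_le_trans _ x0) // ltrN10.
have := ceilB1_lt x; rewrite intrD /= intrN.
by rewrite ceil_ge /= => lt; rewrite -ltrBlDr.
Qed.

Lemma ceiln_mul_le (R : realType) (c : R) (n : nat) : 0 <= c <= 1 ->
  (ceiln (c * n%:R) <= n)%N.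
Proof.
move=> /andP[c0 c1]; have /andP[_ ub] := @ceiln_bounds R _ (mulr_ge0 c0 (ler0n R n)).
rewrite -ltnS -(ltr_nat R) -natr1.
have : c * n%:R <= n%:R by rewrite ler_piMl.
lra.
Qed.

Lemma norm_sub_le_steps (R : realType) (f : nat -> R) (K : R) (t : nat) :
  (forall u, (u < t)%N -> `|f u.+1 - f u| <= K) -> `|f t - f 0%N| <= t%:R * K.
Proof.
elim: t => [|t IH] step; first by rewrite subrr normr0 mul0r.
have -> : f t.+1 - f 0%N = (f t.+1 - f t) + (f t - f 0%N) by ring.
apply: (le_trans (ler_normD _ _)).
rewrite -natr1 mulrDl mul1r addrC; apply: lerD; last exact: step.
by apply: IH => u ut; apply: step; rewrite ltnS ltnW.
Qed.

Lemma ler_pdiv_cross (R : numFieldType) (a b c d : R) : 0 < b -> 0 < d ->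
  a * d <= c * b -> a / b <= c / d.
Proof. by move=> b0 d0 h; rewrite ler_pdivrMr // mulrAC ler_pdivlMr. Qed.

Lemma ln_sub_bounds (R : realType) (a b lo hi : R) : 0 < a -> 0 < b -> 0 < lo ->
  lo * b <= a -> a <= hi * b -> ln lo <= ln a - ln b <= ln hi.
Proof.
move=> a0 b0 lo0 lo_a a_hi.
have hi0 : 0 < hi by rewrite -(pmulr_lgt0 _ b0) (lt_le_trans a0).
rewrite -ln_div ?posrE //; apply/andP; split; rewrite ler_ln ?posrE ?divr_gt0 //.
  by rewrite ler_pdivlMr.
by rewrite ler_pdivrMr.
Qed.

Lemma norm_le_ln_bounds (R : realType) (D lo hi lo' : R) :
  ln lo <= D <= ln hi -> 0 < lo' -> lo' <= lo -> `|D| <= `|ln lo'| + `|ln hi|.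
Proof.
move=> /andP[lo_D D_hi] lo'0 lo'_lo.
have : ln lo' <= ln lo by rewrite ler_ln ?posrE // (lt_le_trans lo'0).
have /andP[? ?] : - `|ln lo'| <= ln lo' <= `|ln lo'| by rewrite -ler_norml.
have /andP[? ?] : - `|ln hi| <= ln hi <= `|ln hi| by rewrite -ler_norml.
rewrite ler_norml; lra.
Qed.

Lemma periodic_bounds (R : realType) (L : nat) (X : nat -> R) : (0 < L)%N ->
  (forall i, 0 < X i) -> (forall i, X (i + L)%N = X i) ->
  exists m M : R, [/\ 0 < m, forall i, m <= X i & forall i, X i <= M].
Proof.
move=> L0 Xpos Xper.
have Xmod i : X i = X (i %% L)%N.
  rewrite {1}(divn_eq i L) addnC; elim: (i %/ L)%N => [|q IH]; first by rewrite addn0.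
  by rewrite mulSn addnCA addnC Xper.
have term_le (f : nat -> R) i : (forall k, 0 <= f k) ->
    f (i %% L)%N <= \sum_(k < L) f k.
  move=> f0; rewrite (bigD1 (Ordinal (ltn_pmod i L0))) //= lerDl.
  by apply: sumr_ge0.
have inv_ge0 k : 0 <= (X k)^-1 by rewrite invr_ge0 ltW.
have sum_inv_gt0 : 0 < \sum_(k < L) (X k)^-1.
  by apply: lt_le_trans (term_le (fun k => (X k)^-1) 0%N inv_ge0); rewrite invr_gt0.
exists (\sum_(k < L) (X k)^-1)^-1, (\sum_(k < L) X k); split.
- by rewrite invr_gt0.
- move=> i; rewrite Xmod -[X (i %% L)%N]invrK lef_pV2 ?posrE ?invr_gt0 //.
  exact: (term_le (fun k => (X k)^-1)).
- by move=> i; rewrite Xmod; apply: (term_le X) => k; rewrite ltW.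
Qed.

Section SymmetricMeans.
Variables (R : realType) (X : nat -> R).

Definition esym n k : R := (\prod_(i < n) ((X i)%:P * 'X + 1))`_k.

Lemma esym0 k : esym 0 k = (k == 0)%:R.
Proof. by rewrite /esym big_ord0 coef1. Qed.

Lemma esymS n k :
  esym n.+1 k = esym n k + (if k is k'.+1 then X n * esym n k' else 0).
Proof.
rewrite /esym big_ord_recr /= mulrDr mulr1 coefD mulrA coefMX coefMC.
by case: k => [|k] /=; rewrite ?add0r ?addr0 // addrC mulrC.
Qed.

Lemma S_esym n k : S X n k = esym n k / 'C(n, k)%:R.
Proof.
rewrite /S /esym mulrC bigA_distr coef_sum big_mkcond /=; congr (_ * _).
apply: eq_bigr => A _; rewrite -big_mkcond /= big_split /= -rmorph_prod.
rewrite prodr_const coefCM coefXn.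
by case: eqP => [->|/eqP]; rewrite ?eqxx ?mulr1 // eq_sym => /negPf ->; rewrite mulr0.
Qed.

Variables (m M : R).
Hypothesis m_gt0 : 0 < m.
Hypothesis m_le : forall i, m <= X i.
Hypothesis le_M : forall i, X i <= M.

Lemma X_gt0 i : 0 < X i. Proof. exact: lt_le_trans (m_le i). Qed.

Lemma M_gt0 : 0 < M. Proof. exact: lt_le_trans (X_gt0 0) (le_M 0). Qed.

Lemma esymn0 n : esym n 0 = 1.
Proof. by elim: n => [|n IH]; rewrite ?esym0 // esymS addr0. Qed.

Lemma esym_ge0 n k : 0 <= esym n k.
Proof.
elim: n k => [|n IH] k; first by rewrite esym0; case: (k == 0).
rewrite esymS; case: k => [|k]; rewrite ?addr0 //.
by rewrite addr_ge0 // mulr_ge0 // ltW // X_gt0.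
Qed.

Lemma esym_bounds n k :
  'C(n, k)%:R * m ^+ k <= esym n k <= 'C(n, k)%:R * M ^+ k.
Proof.
elim: n k => [|n IH] k.
  by rewrite esym0; case: k => [|k] /=; rewrite ?bin0 ?expr0 ?mulr1 ?mul0r ?lexx.
case: k => [|k]; first by rewrite esymn0 bin0 expr0 mulr1 lexx.
rewrite esymS binS natrD !mulrDl.
have /andP[a1 a2] := IH k.+1; have /andP[b1 b2] := IH k.
have Cm_ge0 : 0 <= 'C(n, k)%:R * m ^+ k by rewrite mulr_ge0 // exprn_ge0 // ltW.
apply/andP; split; apply: lerD => //; rewrite exprS mulrCA.
  by apply: ler_pM => //; rewrite ltW.
by apply: ler_pM => //; [exact: ltW (X_gt0 n) | exact: esym_ge0].
Qed.

Lemma esym_gt0 n k : (k <= n)%N -> 0 < esym n k.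
Proof.
move=> kn; have /andP[lb _] := esym_bounds n k; apply: lt_le_trans lb.
by rewrite mulr_gt0 ?exprn_gt0 // ltr0n bin_gt0.
Qed.

Lemma S_gt0 n k : (k <= n)%N -> 0 < S X n k.
Proof. by move=> kn; rewrite S_esym divr_gt0 ?esym_gt0 // ltr0n bin_gt0. Qed.

Lemma esym_succ_lb n k : (n%:R - k%:R) * m * esym n k <= k.+1%:R * esym n k.+1.
Proof.
elim: n k => [|n IH] k.
  rewrite (esym0 k.+1) /= mulr0 sub0r.
  by rewrite !mulNr oppr_le0 !mulr_ge0 ?esym_ge0 // ltW.
case: k => [|k].
  rewrite !esymS !esymn0 addr0 mulr1 subr0 mul1r mulr1.
  have := IH 0; rewrite esymn0 subr0 mulr1 mul1r.
  have := m_le n; rewrite -natr1; lra.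
rewrite !esymS.
have IH_k1 := IH k.+1; have IH_k := IH k.
set a0 := esym n k in IH_k *; set a1 := esym n k.+1 in IH_k IH_k1 *.
set a2 := esym n k.+2 in IH_k1 *.
have x0 := X_gt0 n; have xm := m_le n.
have Xm_a1_ge0 : 0 <= (X n - m) * a1 by rewrite mulr_ge0 ?esym_ge0 // subr_ge0.
have X_IH_k := ler_wpM2l (ltW x0) IH_k.
rewrite -!natr1 in IH_k IH_k1 X_IH_k *.
nra.
Qed.

Lemma esym_succ_ub n k : k.+1%:R * esym n k.+1 <= n%:R * M * esym n k.
Proof.
elim: n k => [|n IH] k.
  by rewrite (esym0 k.+1) /= mulr0 mul0r mul0r.
case: k => [|k].
  rewrite !esymS !esymn0 addr0 mulr1 mul1r mulr1.
  have := IH 0; rewrite esymn0 mulr1 mul1r.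
  have := le_M n; rewrite -natr1; lra.
rewrite !esymS.
have IH_k1 := IH k.+1; have IH_k := IH k.
set a0 := esym n k in IH_k *; set a1 := esym n k.+1 in IH_k IH_k1 *.
set a2 := esym n k.+2 in IH_k1 *.
have x0 := X_gt0 n; have xM := le_M n.
have MX_a1_ge0 : 0 <= (M - X n) * a1 by rewrite mulr_ge0 ?esym_ge0 // subr_ge0.
have X_IH_k := ler_wpM2l (ltW x0) IH_k.
have MXa0_ge0 : 0 <= M * X n * a0 by rewrite !mulr_ge0 ?esym_ge0 // ltW // M_gt0.
rewrite -!natr1 in IH_k IH_k1 X_IH_k *.
nra.
Qed.

Local Notation lnS n k := (ln (S X n k)).

Lemma lnS_diag_step_bounds n i : (i <= n)%N ->
  ln (m * i.+1%:R / n.+1%:R) <= lnS n.+1 i.+1 - lnS n i <= ln (2 * M).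
Proof.
move=> i_le_n.
have C0 : 0 < 'C(n, i)%:R :> R by rewrite ltr0n bin_gt0.
have C1 : 0 < 'C(n.+1, i.+1)%:R :> R by rewrite ltr0n bin_gt0.
have C_rel : i.+1%:R * 'C(n.+1, i.+1)%:R = n.+1%:R * 'C(n, i)%:R :> R.
  by rewrite -!natrM -mul_bin_diag.
have e0 := esym_gt0 n i i_le_n; have e_ub := esym_succ_ub n i.
have e_rec := esymS n i.+1.
have xm := m_le n; have xM := le_M n; have x0 := X_gt0 n.
apply: ln_sub_bounds; rewrite ?S_gt0 //.
- by rewrite !mulr_gt0 ?invr_gt0 ?ltr0n.
- rewrite !S_esym mulf_div; apply: ler_pdiv_cross => //.
    by rewrite mulr_gt0 // ltr0n.
  rewrite -C_rel e_rec.
  have lb : m * esym n i <= esym n i.+1 + X n * esym n i.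
    have := esym_ge0 n i.+1; have := ler_wpM2r (ltW e0) xm; lra.
  have iC_ge0 : 0 <= i.+1%:R * 'C(n.+1, i.+1)%:R :> R by rewrite mulr_ge0 // ltW.
  have := ler_wpM2r iC_ge0 lb; lra.
- rewrite !S_esym mulrA; apply: ler_pdiv_cross => //; rewrite e_rec.
  set a0 := esym n i in e0 e_ub *; set a1 := esym n i.+1 in e_ub *.
  have i_le : (i.+1%:R : R) <= n.+1%:R by rewrite ler_nat.
  have Xa0_le := ler_wpM2l (ltW e0) xM.
  have Ma0 : 0 <= M * a0 by rewrite mulr_ge0 // ltW // M_gt0.
  have Ma0_i_le := ler_wpM2r Ma0 i_le.
  have n_le : (n%:R : R) <= n.+1%:R by rewrite ler_nat.
  have Ma0_n_le := ler_wpM2r Ma0 n_le.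
  have iXa0_le := ler_wpM2l (ler0n _ i.+1) Xa0_le.
  have num_le : i.+1%:R * a1 + i.+1%:R * X n * a0 <= 2 * n.+1%:R * M * a0.
    lra.
  have num_le_C := ler_wpM2r (ltW C1) num_le.
  rewrite -(ler_pM2l (ltr0n _ n.+1 : (0 : R) < _)).
  have -> : n.+1%:R * ((a1 + X n * a0) * 'C(n, i)%:R)
      = (i.+1%:R * a1 + i.+1%:R * X n * a0) * 'C(n.+1, i.+1)%:R.
    transitivity ((a1 + X n * a0) * (n.+1%:R * 'C(n, i)%:R)); first by ring.
    by rewrite -C_rel; ring.
  lra.
Qed.

Lemma esym_row_succ_ub n i : (i <= n)%N ->
  m * ((n.+1%:R - i%:R) * esym n.+1 i) <= (m + M) * (n.+1%:R * esym n i).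
Proof.
have xm := m_le n; have xM := le_M n; have x0 := X_gt0 n.
rewrite esymS; case: i => [|i] i_le_n.
  rewrite addr0 subr0; apply: ler_wpM2r; last by rewrite lerDl ltW // M_gt0.
  by rewrite mulr_ge0 ?esym_ge0.
have e_lb := esym_succ_lb n i.
have e0 := esym_gt0 n i.+1 i_le_n.
set a := esym n i in e_lb *; set a0 := esym n i.+1 in e_lb e0 *.
have a_ge0 : 0 <= a by apply: esym_ge0.
have hxa := ler_wpM2l (ltW x0) e_lb.
have hMa : X n * (i.+1%:R * a0) <= M * (i.+1%:R * a0).
  by rewrite ler_wpM2r // mulr_ge0 // ltW.
have i_le : (i.+1%:R : R) <= n.+1%:R by rewrite ler_nat ltnS (leq_trans _ i_le_n).
have hMa2 := ler_wpM2l (ltW M_gt0) (ler_wpM2r (ltW e0) i_le).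
have hmb : m * a0 * (n%:R - i%:R) <= m * a0 * n.+1%:R.
  apply: ler_wpM2l; first by rewrite mulr_ge0 // ltW.
  by rewrite -natr1; have : (0:R) <= i%:R by []; lra.
rewrite -!natr1 in e_lb hxa hMa i_le hMa2 hmb *.
lra.
Qed.

Lemma lnS_row_step_bounds n i : (i <= n)%N ->
  ln ((n.+1%:R - i%:R) / n.+1%:R) <= lnS n.+1 i - lnS n i <= ln ((m + M) / m).
Proof.
move=> i_le_n.
have C0 : 0 < 'C(n, i)%:R :> R by rewrite ltr0n bin_gt0.
have C1 : 0 < 'C(n.+1, i)%:R :> R by rewrite ltr0n bin_gt0 (leq_trans i_le_n).
have C_rel : (n.+1%:R - i%:R) * 'C(n.+1, i)%:R = n.+1%:R * 'C(n, i)%:R :> R.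
  by rewrite -natrB ?(leq_trans i_le_n) // -!natrM -mul_bin_down.
have e_le : esym n i <= esym n.+1 i.
  rewrite esymS; case: (i) => [|i']; rewrite ?addr0 //.
  by rewrite lerDl mulr_ge0 ?esym_ge0 // ltW // X_gt0.
apply: ln_sub_bounds; rewrite ?S_gt0 ?(leq_trans i_le_n) //.
- by rewrite divr_gt0 ?ltr0n // subr_gt0 ltr_nat ltnS.
- rewrite !S_esym mulf_div; apply: ler_pdiv_cross => //.
    by rewrite mulr_gt0 // ltr0n.
  rewrite -C_rel.
  have nC_ge0 : 0 <= (n.+1%:R - i%:R) * 'C(n.+1, i)%:R :> R.
    by rewrite mulr_ge0 ?subr_ge0 ?ler_nat ?(leq_trans i_le_n) // ltW.
  have := ler_wpM2r nC_ge0 e_le; lra.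
- rewrite !S_esym mulrA; apply: ler_pdiv_cross => //.
  rewrite -(ler_pM2l (mulr_gt0 m_gt0 (ltr0n _ n.+1 : (0 : R) < _))).
  have -> : m * n.+1%:R * (esym n.+1 i * 'C(n, i)%:R)
      = m * ((n.+1%:R - i%:R) * esym n.+1 i) * 'C(n.+1, i)%:R.
    transitivity (m * esym n.+1 i * (n.+1%:R * 'C(n, i)%:R)); first by ring.
    by rewrite -C_rel; ring.
  have -> : m * n.+1%:R * ((m + M) / m * esym n i * 'C(n.+1, i)%:R)
      = (m + M) * (n.+1%:R * esym n i) * 'C(n.+1, i)%:R.
    by field; rewrite gt_eqF.
  by rewrite ler_wpM2r ?esym_row_succ_ub // ltW.
Qed.

Lemma lnS_bounds n i : (i <= n)%N -> i%:R * ln m <= lnS n i <= i%:R * ln M.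
Proof.
move=> i_le_n; have /andP[lb ub] := esym_bounds n i.
have C0 : 0 < 'C(n, i)%:R :> R by rewrite ltr0n bin_gt0.
rewrite !mulr_natl -!lnXn ?M_gt0 //.
apply/andP; split; rewrite ler_ln ?posrE ?exprn_gt0 ?S_gt0 ?M_gt0 // S_esym.
  by rewrite ler_pdivlMr // mulrC.
by rewrite ler_pdivrMr // mulrC.
Qed.

Definition diag_step_bound c := `|ln (m * c / 2)| + `|ln (2 * M)|.
Definition row_step_bound c := `|ln ((1 - c) / 2)| + `|ln ((m + M) / m)|.

Lemma lnS_diag_step c n i : 0 < c -> (i <= n)%N ->
  c * n.+1%:R <= 2 * i.+1%:R -> `|lnS n.+1 i.+1 - lnS n i| <= diag_step_bound c.
Proof.
move=> c0 i_le_n ratio.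
apply: (@norm_le_ln_bounds _ _ _ _ _ (lnS_diag_step_bounds n i i_le_n)).
  by rewrite !mulr_gt0.
apply: ler_pdiv_cross; rewrite ?ltr0n //.
have := ler_wpM2l (ltW m_gt0) ratio; lra.
Qed.

Lemma lnS_row_step c n i : c < 1 -> (i <= n)%N ->
  (1 - c) * n.+1%:R <= 2 * (n.+1%:R - i%:R) ->
  `|lnS n.+1 i - lnS n i| <= row_step_bound c.
Proof.
move=> c1 i_le_n ratio.
apply: (@norm_le_ln_bounds _ _ _ _ _ (lnS_row_step_bounds n i i_le_n)).
  by rewrite divr_gt0 // subr_gt0.
by apply: ler_pdiv_cross; rewrite ?ltr0n //; lra.
Qed.

(* Walk from (N, j) to (N + t, j) with k fixed, then diagonally to
   (N + t + s, j + s); along the way k/n stays within [c/2, (1+c)/2]. *)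
Lemma lnS_path_bound c N t s j : 0 < c <= 1 -> (t = 0%N \/ c < 1) ->
  (t + s < N)%N -> c * N%:R <= j%:R < c * N%:R + 1 -> (j <= N)%N ->
  `|lnS (N + t + s) (j + s) - lnS N j|
    <= t%:R * row_step_bound c + s%:R * diag_step_bound c.
Proof.
move=> /andP[c0 c1] t0_or_c1 tsN /andP[jl ju] jN.
have N1 : (1 : R) <= N%:R by rewrite ler1n; lia.
have row : `|lnS (N + t) j - lnS N j| <= t%:R * row_step_bound c.
  have := @norm_sub_le_steps _ (fun u => lnS (N + u) j) (row_step_bound c) t.
  rewrite addn0; apply=> u ut; rewrite addnS.
  have c_lt1 : c < 1 by case: t0_or_c1 => // t0; move: ut; rewrite t0.
  apply: lnS_row_step; rewrite // ?(leq_trans jN) ?leq_addr // -natr1 natrD.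
  have : 0 <= (1 - c) * (N%:R - 1) by rewrite mulr_ge0 // subr_ge0 // ltW.
  have : 0 <= c * u%:R by rewrite mulr_ge0 // ltW.
  have : (0 : R) <= u%:R by [].
  lra.
have diag : `|lnS (N + t + s) (j + s) - lnS (N + t) j| <= s%:R * diag_step_bound c.
  have := @norm_sub_le_steps _ (fun u => lnS (N + t + u) (j + u)) (diag_step_bound c) s.
  rewrite !addn0; apply=> u us; rewrite !addnS.
  apply: lnS_diag_step; rewrite // ?leq_add2r ?(leq_trans jN) ?leq_addr //.
  have : ((N + t + u).+1%:R : R) <= (N + N)%:R by rewrite ler_nat; lia.
  rewrite -!natr1 !natrD => le2N.
  have := ler_wpM2l (ltW c0) le2N.
  have : (0 : R) <= u%:R by [].
  lra.
have -> : lnS (N + t + s) (j + s) - lnS N j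
    = (lnS (N + t + s) (j + s) - lnS (N + t) j) + (lnS (N + t) j - lnS N j) by ring.
by apply: (le_trans (ler_normD _ _)); rewrite addrC lerD.
Qed.

Definition lnX_bound := `|ln m| + `|ln M|.
Definition rate_gap_bound (L : nat) c :=
  L%:R * (row_step_bound c + diag_step_bound c) + L%:R * lnX_bound.

Definition lnS_rate (c : R) n := lnS n (ceiln (c * n%:R)) / (ceiln (c * n%:R))%:R.

Lemma rate_gap_bound_ge0 L c : 0 <= rate_gap_bound L c.
Proof. by rewrite !addr_ge0 ?mulr_ge0 ?addr_ge0. Qed.

Lemma lnS_rate_gap (L : nat) c n : (0 < L)%N -> 0 < c <= 1 -> (L <= n)%N ->
  `|lnS_rate c n - lnS_rate c (n %/ L * L)| <= rate_gap_bound L c / (c * n%:R).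
Proof.
move=> L0 c_range L_le_n; have /andP[c0 c1] := c_range; rewrite /lnS_rate.
set N := (n %/ L * L)%N; set r := (n %% L)%N.
have nE : n = (N + r)%N by rewrite /N /r -divn_eq.
have r_lt : (r < L)%N by rewrite ltn_pmod.
have L_le_N : (L <= N)%N by rewrite /N leq_pmull // divn_gt0.
have c01 : 0 <= c <= 1 by rewrite ltW.
set j := ceiln (c * n%:R); set j' := ceiln (c * N%:R).
have /andP[jl ju] := @ceiln_bounds R _ (mulr_ge0 (ltW c0) (ler0n R n)).
have /andP[jl' ju'] := @ceiln_bounds R _ (mulr_ge0 (ltW c0) (ler0n R N)).
rewrite -/j in jl ju; rewrite -/j' in jl' ju'.
have nR : (n%:R : R) = N%:R + r%:R by rewrite nE natrD.
have N1 : (1 : R) <= N%:R by rewrite ler1n (leq_trans L0).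
have j'_le_N : (j' <= N)%N by apply: ceiln_mul_le.
have j'_le_j : (j' <= j)%N.
  rewrite -ltnS -(ltr_nat R) -natr1.
  have : c * N%:R <= c * n%:R by rewrite ler_pM2l // ler_nat nE leq_addr.
  lra.
have j_le : (j <= j' + r)%N.
  rewrite -ltnS -(ltr_nat R) -natr1 natrD.
  have : c * r%:R <= r%:R by rewrite ler_piMl.
  rewrite nR mulrDr in ju; lra.
have j'_gt0 : (0 < j')%N.
  by rewrite -(ltr_nat R) (lt_le_trans _ jl') // mulr_gt0 // (lt_le_trans _ N1).
set s := (j - j')%N; set t := (r - s)%N.
have jE : j = (j' + s)%N by rewrite /s subnKC.
have s_le_r : (s <= r)%N by rewrite /s leq_subLR.
have tsE : (t + s)%N = r by rewrite /t subnK.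
have nE2 : n = (N + t + s)%N by rewrite -addnA tsE.
have t0_or_c1 : t = 0%N \/ c < 1.
  have [|c_ge1] := ltP c 1; first by right.
  have c_eq1 : c = 1 by apply/le_anti; rewrite c1.
  rewrite c_eq1 mul1r ler_nat in jl.
  left; apply/eqP; rewrite subn_eq0 /s leq_subRL //.
  by apply: leq_trans jl; rewrite nE leq_add2r.
have tsN : (t + s < N)%N by rewrite tsE (leq_trans r_lt).
have j'_bounds : c * N%:R <= j'%:R < c * N%:R + 1 by apply/andP.
have path := lnS_path_bound c N t s j' c_range t0_or_c1 tsN j'_bounds j'_le_N.
rewrite -jE -nE2 in path.
set A := lnS n j in path *; set B := lnS N j' in path *.
have j_gt0 : (0 : R) < j%:R by rewrite ltr0n (leq_trans j'_gt0).
have j'_gt0R : (0 : R) < j'%:R by rewrite ltr0n.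
set beta := B / j'%:R.
have beta_le : `|beta| <= lnX_bound.
  have /andP[lb ub] := lnS_bounds N j' j'_le_N; rewrite -/B in lb ub.
  have : ln m <= beta by rewrite /beta ler_pdivlMr // mulrC.
  have : beta <= ln M by rewrite /beta ler_pdivrMr // mulrC.
  have /andP[? ?] : - `|ln m| <= ln m <= `|ln m| by rewrite -ler_norml.
  have /andP[? ?] : - `|ln M| <= ln M <= `|ln M| by rewrite -ler_norml.
  rewrite ler_norml /lnX_bound; lra.
have -> : A / j%:R - beta = ((A - B) - beta * (j%:R - j'%:R)) / j%:R.
  by rewrite /beta; field; rewrite ?gt_eqF.
rewrite normf_div (gtr0_norm j_gt0).
have num_le : `|(A - B) - beta * (j%:R - j'%:R)| <= rate_gap_bound L c.
  have s_eq : (j%:R : R) - j'%:R = s%:R by rewrite jE natrD addrAC subrr add0r.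
  rewrite s_eq; apply: (le_trans (ler_normB _ _)).
  rewrite normrM (ger0_norm (ler0n _ _)).
  have t_le : (t%:R : R) <= L%:R by rewrite ler_nat (leq_trans _ (ltnW r_lt)) // -tsE leq_addr.
  have s_le : (s%:R : R) <= L%:R by rewrite ler_nat (leq_trans s_le_r (ltnW r_lt)).
  have row0 : 0 <= row_step_bound c by rewrite addr_ge0.
  have diag0 : 0 <= diag_step_bound c by rewrite addr_ge0.
  have := ler_wpM2r row0 t_le; have := ler_wpM2r diag0 s_le.
  have := ler_wpM2l (normr_ge0 beta) s_le.
  have := ler_wpM2r (ler0n R L) beta_le.
  rewrite /rate_gap_bound; lra.
apply: (@le_trans _ _ (rate_gap_bound L c / j%:R)).
  by apply: ler_wpM2r => //; rewrite invr_ge0 ltW.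
apply: ler_wpM2l; first exact: rate_gap_bound_ge0.
by rewrite lef_pV2 ?posrE // mulr_gt0 // ltr0n (leq_trans L0).
Qed.

Lemma lnS_rate_gap_cvg0 (L : nat) c : (0 < L)%N -> 0 < c <= 1 ->
  (fun n => lnS_rate c n - lnS_rate c (n %/ L * L)) @ \oo --> 0.
Proof.
move=> L0 c_range; have /andP[c0 _] := c_range.
apply/cvgrPdist_lt => eps eps0; near=> n; rewrite sub0r normrN.
have L_le_n : (L <= n)%N by near: n; apply: nbhs_infty_ge.
have n_large : rate_gap_bound L c / (c * eps) + 1 <= n%:R.
  by near: n; apply: nbhs_infty_ger.
apply: (le_lt_trans (lnS_rate_gap _ _ _ L0 c_range L_le_n)).
rewrite ltr_pdivrMr ?mulr_gt0 ?ltr0n ?(leq_trans L0) //.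
have : rate_gap_bound L c / (c * eps) < n%:R by lra.
by rewrite ltr_pdivrMr ?mulr_gt0 // => ?; lra.
Unshelve. all: end_near.
Qed.

Lemma powR_S_rate c n : 0 <= c <= 1 ->
  powR (S X n (ceiln (c * n%:R))) ((ceiln (c * n%:R))%:R)^-1 = expR (lnS_rate c n).
Proof. by move=> c01; rewrite /powR gt_eqF ?S_gt0 ?ceiln_mul_le // mulrC. Qed.

Lemma powR_S_split (L : nat) c : 0 < c <= 1 ->
  (fun n => powR (S X n (ceiln (c * n%:R))) ((ceiln (c * n%:R))%:R)^-1)
  = (fun n => expR (lnS_rate c n - lnS_rate c (n %/ L * L)) * FX X L (n %/ L) c).
Proof.
move=> /andP[c0 c1]; apply/funext => n.
have c01 : 0 <= c <= 1 by rewrite ltW.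
by rewrite /FX gt_eqF //= !powR_S_rate // -expRD subrK.
Qed.

End SymmetricMeans.

Theorem lemma4p4 (R : realType) (L : nat) (X : nat -> R) (F : R -> R) :
  (0 < L)%N ->
  (forall i, 0 < X i) ->
  (forall i, X (i + L)%N = X i) ->
  (forall c, 0 <= c <= 1 -> (fun k => FX X L k c) @ \oo --> F c) ->
  {within `[0, 1], continuous F} ->
  forall c, 0 < c <= 1 ->
    (fun n => powR (S X n (ceiln (c * n%:R))) ((ceiln (c * n%:R))%:R)^-1)
      @ \oo --> F c.
Proof.
move=> L0 Xpos Xper FX_cvg _ c c_range.
have [m [M [m_gt0 m_le le_M]]] := periodic_bounds _ _ _ L0 Xpos Xper.
have c01 : 0 <= c <= 1 by case/andP: c_range => c0 ->; rewrite ltW.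
rewrite (powR_S_split _ _ _ _ m_gt0 m_le le_M L _ c_range).
have -> : F c = expR 0 * F c by rewrite expR0 mul1r.
apply: cvgM.
- exact: continuous_cvg (@continuous_expR R 0) (lnS_rate_gap_cvg0 _ _ _ _ m_gt0 m_le le_M _ _ L0 c_range).
- exact: cvg_comp (cvg_divnr L L0) (FX_cvg c c01).
Qed.
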